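(* Let $\mathcal{R}$ be a commutative ring with unity, $P$ a locally finite poset and $b$ an additive biderivation of $I(P,\mathcal{R})$. For any $x<y<z$ in $P$: (1) $b_{xy}(e_{xy},e_{xx})=b_{yz}(e_{yz},e_{yy})=b_{xz}(e_{xz},e_{xx})$; (2) $b_{xy}(e_{xx},e_{xy})=b_{yz}(e_{yy},e_{yz})=b_{xz}(e_{xx},e_{xz})$.
   Context: $I(P,\mathcal{R})$ is the incidence algebra: functions $f:P\times P\to\mathcal{R}$ with $f(x,y)=0$ unless $x\le y$, with product $(fg)(x,y)=\sum_{x\le z\le y}f(x,z)g(z,y)$; $e_{xy}$ ($x\le y$) is the function equal to $1$ at $(x,y)$ and $0$ elsewhere. An additive biderivation is a map $b$ of two arguments, additive in each, with $b(\alpha\beta,\gamma)=\alpha b(\beta,\gamma)+b(\alpha,\gamma)\beta$ and $b(\alpha,\beta\gamma)=\beta b(\alpha,\gamma)+b(\alpha,\beta)\gamma$. Write $b_{pq}(\alpha,\beta)=b(\alpha,\beta)(p,q)$. *)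

From HB Require Import structures.
From mathcomp Require Import all_boot all_order all_algebra.
Set Implicit Arguments. Unset Strict Implicit. Unset Printing Implicit Defensive.
Import Order.TTheory GRing.Theory.
Local Open Scope ring_scope.

Definition locally_finite_enum (d : Order.disp_t) (P : porderType d)
  (itv : P -> P -> seq P) : Prop :=
  forall x y : P, uniq (itv x y) /\
    forall z : P, (z \in itv x y) = ((x <= z)%O && (z <= y)%O).

Section Incidence.
Variables (d : Order.disp_t) (P : porderType d) (R : comNzRingType)
  (itv : P -> P -> seq P).

Definition incidence (f : P -> P -> R) : Prop :=
  forall x y : P, ~~ (x <= y)%O -> f x y = 0.

Definition inc_add (f g : P -> P -> R) : P -> P -> R :=
  fun x y => f x y + g x y.

(* Convolution product (fg)(x,y) = sum_{x <= z <= y} f(x,z) g(z,y);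
   the interval is empty unless x <= y, so the sum is 0 then. *)
Definition inc_mul (f g : P -> P -> R) : P -> P -> R :=
  fun x y => \sum_(z <- itv x y) f x z * g z y.

Definition inc_e (x y : P) : P -> P -> R :=
  fun u v => if (u == x) && (v == y) then 1 else 0.

Definition is_biderivation
  (b : (P -> P -> R) -> (P -> P -> R) -> (P -> P -> R)) : Prop :=
  [/\ (forall f g, incidence f -> incidence g -> incidence (b f g)),
      (forall f g h, incidence f -> incidence g -> incidence h ->
         b (inc_add f g) h = inc_add (b f h) (b g h)),
      (forall f g h, incidence f -> incidence g -> incidence h ->
         b f (inc_add g h) = inc_add (b f g) (b f h)),
      (forall f g h, incidence f -> incidence g -> incidence h ->
         b (inc_mul f g) h = inc_add (inc_mul f (b g h)) (inc_mul (b f h) g))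
    & (forall f g h, incidence f -> incidence g -> incidence h ->
         b f (inc_mul g h) = inc_add (inc_mul g (b f h)) (inc_mul (b f g) h))].

End Incidence.

(* Since e_xz = e_xy e_yz, the left Leibniz rule gives
   b_xz(e_xz, h) = b_yz(e_yz, h) + b_xy(e_xy, h).  Taking h = e_xx kills the first
   summand and taking h = e_yy kills the left-hand side, because b(f, e_ww) is
   supported on row and column w (e_ww is idempotent).  As e_xx e_yy = 0,
   b_xy(f, e_xx) + b_xy(f, e_yy) = 0, and the two identities combine into (1).
   Swapping the arguments of a biderivation yields a biderivation, which turns (1)
   into (2). *)

From HB Require Import structures.
From mathcomp Require Import all_boot all_order all_algebra.
From Stdlib Require Import FunctionalExtensionality.
Set Implicit Arguments. Unset Strict Implicit.
Import Order.TTheory GRing.Theory.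
Local Open Scope ring_scope.

Section IncidenceAlgebra.
Variables (d : Order.disp_t) (P : porderType d) (R : comNzRingType)
  (itv : P -> P -> seq P) (Hlf : locally_finite_enum itv).

Local Notation e := (@inc_e d P R).

Lemma incidence_e (u v : P) : (u <= v)%O -> incidence (e u v).
Proof.
move=> le_uv a c; rewrite /inc_e.
by case: eqP => [->|_]; case: eqP => [->|_] //=; rewrite le_uv.
Qed.

Lemma inc_mul_e_l (u v w : P) (g : P -> P -> R) :
  (u <= v)%O -> (v <= w)%O -> inc_mul itv (e u v) g u w = g v w.
Proof.
move=> le_uv le_vw; have [uniq_uw mem_uw] := Hlf u w.
have v_uw : v \in itv u w by rewrite mem_uw le_uv le_vw.
rewrite /inc_mul (bigD1_seq v v_uw uniq_uw) /= /inc_e !eqxx mul1r.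
by rewrite big1 ?addr0 // => t /negbTE nt_v; rewrite nt_v mul0r.
Qed.

Lemma inc_mul_e_r (u v w : P) (g : P -> P -> R) :
  (u <= v)%O -> (v <= w)%O -> inc_mul itv g (e v w) u w = g u v.
Proof.
move=> le_uv le_vw; have [uniq_uw mem_uw] := Hlf u w.
have v_uw : v \in itv u w by rewrite mem_uw le_uv le_vw.
rewrite /inc_mul (bigD1_seq v v_uw uniq_uw) /= /inc_e !eqxx mulr1.
by rewrite big1 ?addr0 // => t /negbTE nt_v; rewrite nt_v mulr0.
Qed.

Lemma inc_mul_e_l0 (u v a c : P) (g : P -> P -> R) :
  a != u -> inc_mul itv (e u v) g a c = 0.
Proof.
by move=> /negbTE na_u; rewrite /inc_mul big1 // => t _; rewrite /inc_e na_u mul0r.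
Qed.

Lemma inc_mul_e_r0 (u v a c : P) (g : P -> P -> R) :
  c != v -> inc_mul itv g (e u v) a c = 0.
Proof.
by move=> /negbTE nc_v; rewrite /inc_mul big1 // => t _; rewrite /inc_e nc_v andbF mulr0.
Qed.

Lemma inc_mul_ee (u v w : P) :
  (u <= v)%O -> (v <= w)%O -> inc_mul itv (e u v) (e v w) = e u w.
Proof.
move=> le_uv le_vw; apply: functional_extensionality => a.
apply: functional_extensionality => c.
have [->|na_u] := eqVneq a u; last by rewrite inc_mul_e_l0 // /inc_e (negbTE na_u).
have [->|nc_w] := eqVneq c w; last by rewrite inc_mul_e_r0 // /inc_e (negbTE nc_w) andbF.
by rewrite inc_mul_e_l // /inc_e !eqxx.
Qed.

Lemma inc_mul_e_orth (u v w t : P) :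
  v != w -> inc_mul itv (e u v) (e w t) = (fun _ _ => 0).
Proof.
move=> nv_w; apply: functional_extensionality => a.
apply: functional_extensionality => c; rewrite /inc_mul big1 // => s _.
rewrite /inc_e; have [->|_] := eqVneq s v; last by rewrite andbF mul0r.
by rewrite (negbTE nv_w) mulr0.
Qed.

Variables (b : (P -> P -> R) -> (P -> P -> R) -> (P -> P -> R))
  (Hb : is_biderivation itv b).

Lemma biderivation0r (f : P -> P -> R) (a c : P) :
  incidence f -> b f (fun _ _ => 0) a c = 0.
Proof.
move=> If; case: Hb => _ _ bD _ _.
have := congr1 (fun F => F a c) (bD f _ _ If (fun _ _ _ => erefl) (fun _ _ _ => erefl)).
rewrite /inc_add /= addr0 => /esym /eqP.
by rewrite -subr_eq0 addrK => /eqP.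
Qed.

Lemma biderivation_split_l (u v w : P) (h : P -> P -> R) :
  (u <= v)%O -> (v <= w)%O -> incidence h ->
  b (e u w) h u w = b (e v w) h v w + b (e u v) h u v.
Proof.
move=> le_uv le_vw Ih; case: Hb => _ _ _ bMl _.
have [Iuv Ivw] := (incidence_e le_uv, incidence_e le_vw).
by rewrite -(inc_mul_ee le_uv le_vw) bMl // /inc_add inc_mul_e_l // inc_mul_e_r.
Qed.

Lemma biderivation_idem_r (f : P -> P -> R) (w u v : P) :
  u != w -> v != w -> incidence f -> b f (e w w) u v = 0.
Proof.
move=> nu_w nv_w If; case: Hb => _ _ _ _ bMr.
have Iww := incidence_e (lexx w).
rewrite -(inc_mul_ee (lexx w) (lexx w)) bMr // /inc_add.
by rewrite inc_mul_e_l0 // inc_mul_e_r0 // addr0.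
Qed.

Lemma biderivation_diag_sum_r (f : P -> P -> R) (u v : P) :
  (u < v)%O -> incidence f -> b f (e u u) u v + b f (e v v) u v = 0.
Proof.
move=> lt_uv If; case: Hb => _ _ _ _ bMr.
have := congr1 (fun F => F u v)
  (bMr f _ _ If (incidence_e (lexx u)) (incidence_e (lexx v))).
rewrite inc_mul_e_orth ?(lt_eqF lt_uv) // biderivation0r // /inc_add.
by rewrite inc_mul_e_l ?lexx ?ltW // inc_mul_e_r ?lexx ?ltW // addrC => <-.
Qed.

Lemma biderivation_ee_chain (x y z : P) : (x < y)%O -> (y < z)%O ->
  b (e x y) (e x x) x y = b (e y z) (e y y) y z /\
  b (e y z) (e y y) y z = b (e x z) (e x x) x z.
Proof.
move=> lt_xy lt_yz; have lt_xz := lt_trans lt_xy lt_yz.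
have [le_xy le_yz] := (ltW lt_xy, ltW lt_yz).
have [Iyz Ixz] := (incidence_e le_yz, incidence_e (ltW lt_xz)).
have split_xx := biderivation_split_l le_xy le_yz (incidence_e (lexx x)).
rewrite (biderivation_idem_r (w := x) (u := y)) ?(gt_eqF lt_xy) ?(gt_eqF lt_xz) //
  add0r in split_xx.
have split_yy := biderivation_split_l le_xy le_yz (incidence_e (lexx y)).
rewrite (biderivation_idem_r (w := y) (u := x)) ?(lt_eqF lt_xy) ?(gt_eqF lt_yz) //
  in split_yy.
have diag_sum := biderivation_diag_sum_r lt_xy (incidence_e le_xy).
suff -> : b (e y z) (e y y) y z = b (e x y) (e x x) x y by [].
by apply: (addIr (b (e x y) (e y y) x y)); rewrite -split_yy diag_sum.
Qed.

End IncidenceAlgebra.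

Lemma biderivation_flip (d : Order.disp_t) (P : porderType d) (R : comNzRingType)
  (itv : P -> P -> seq P) (b : (P -> P -> R) -> (P -> P -> R) -> (P -> P -> R)) :
  is_biderivation itv b -> is_biderivation itv (fun f g => b g f).
Proof.
by case=> bI bDl bDr bMl bMr; split=> f g *;
  [apply: bI | apply: bDr | apply: bDl | apply: bMr | apply: bMl].
Qed.

Theorem mainTheorem14 (d : Order.disp_t) (P : porderType d) (R : comNzRingType)
  (itv : P -> P -> seq P) (Hlf : locally_finite_enum itv)
  (b : (P -> P -> R) -> (P -> P -> R) -> (P -> P -> R))
  (Hb : is_biderivation itv b) (x y z : P)
  (Hxy : (x < y)%O) (Hyz : (y < z)%O) :
  (b (@inc_e _ _ R x y) (@inc_e _ _ R x x) x y = b (@inc_e _ _ R y z) (@inc_e _ _ R y y) y z /\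
   b (@inc_e _ _ R y z) (@inc_e _ _ R y y) y z = b (@inc_e _ _ R x z) (@inc_e _ _ R x x) x z) /\
  (b (@inc_e _ _ R x x) (@inc_e _ _ R x y) x y = b (@inc_e _ _ R y y) (@inc_e _ _ R y z) y z /\
   b (@inc_e _ _ R y y) (@inc_e _ _ R y z) y z = b (@inc_e _ _ R x x) (@inc_e _ _ R x z) x z).
Proof.
split; first exact (biderivation_ee_chain Hlf Hb Hxy Hyz).
exact (biderivation_ee_chain Hlf (biderivation_flip Hb) Hxy Hyz).
Qed.
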